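(* Let $H$ be a finite dimensional quasi-Hopf algebra over a field $k$ with nonzero left integral $t$. Let $A$ be a left $H$-module algebra, $B=A^H$, and $$(-,-):A\otimes A\to B,\qquad (a,b)=t\cdot[(p_L^1\cdot a)(p_L^2\cdot b)]$$ (the Morita map, defined on $A\otimes_{A\#H}A$). The following statements are equivalent: 1. the map $(-,-)$ is surjective; 2. there is a total integral for $A$; 3. $A$ has an element of trace one, i.e. an $a\in A$ with $t\cdot a=1_A$.
   Context: Let $H$ be a quasi-Hopf algebra over a field $k$, with data $(H,\Delta,\varepsilon,\phi,S,\alpha,\beta)$, written $\Delta(h)=h_1\otimes h_2$, $\phi=X^1\otimes X^2\otimes X^3$, $\phi^{-1}=x^1\otimes x^2\otimes x^3$ (summation suppressed). The axioms are: - $\phi(\Delta\otimes I)\Delta(h)\phi^{-1}=(I\otimes\Delta)\Delta(h)$; - $(I\otimes\varepsilon)\Delta=(\varepsilon\otimes I)\Delta=I$; - $(I\otimes I\otimes\Delta)(\phi)(\Delta\otimes I\otimes I)(\phi)=(1\otimes\phi)(I\otimes\Delta\otimes I)(\phi)(\phi\otimes1)$; - $(I\otimes\varepsilon\otimes I)(\phi)=1\otimes1$; - $S$ is an anti-algebra morphism, with $S(h_1)\alpha h_2=\varepsilon(h)\alpha$ and $h_1\beta S(h_2)=\varepsilon(h)\beta$; - $X^1\beta S(X^2)\alpha X^3=1$ and $S(x^1)\alpha x^2\beta S(x^3)=1$; - $\varepsilon(\alpha)=\varepsilon(\beta)=1$. For finite dimensional $H$, $S$ is bijective. Define $p_L=p_L^1\otimes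 p_L^2=X^2S^{-1}(X^1\beta)\otimes X^3$. A left integral is $t\in H$ with $ht=\varepsilon(h)t$ for all $h$. A left $H$-module algebra is a left $H$-module $A$ with a bilinear, not necessarily associative, multiplication and a unit $1_A$ satisfying: - $(ab)c=(X^1\cdot a)[(X^2\cdot b)(X^3\cdot c)]$; - $h\cdot(ab)=(h_1\cdot a)(h_2\cdot b)$; - $h\cdot1_A=\varepsilon(h)1_A$. $B=A^H=\{a\mid h\cdot a=\varepsilon(h)a\ \forall h\}$. A total integral for $A$ is a left $H$-linear map $\Phi:H^*\to A$ with $\Phi(\varepsilon)=1_A$. Here $H^*$ is a left $H$-module via $(h\rightharpoonup h^* )(g)=h^*(gh)$. *)

From HB Require Import structures.
From mathcomp Require Import all_boot all_order all_algebra.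
From mathcomp Require Import falgebra.
Set Implicit Arguments. Unset Strict Implicit. Unset Printing Implicit Defensive.
Import GRing.Theory.
Local Open Scope ring_scope.

Section QuasiHopf.
Variables (F : fieldType) (H : falgType F).

Definition dimH := \dim {:H}.
Definition bas (i : 'I_dimH) : H := tnth (vbasis {:H}) i.
Definition crd (i : 'I_dimH) (h : H) : F := coord (vbasis {:H}) i h.

(* H^{\otimes k}: an element is given by its coefficients on the basis
   bas (ix 0) (x) ... (x) bas (ix (k-1)) *)
Definition idx (k : nat) := {ffun 'I_k -> 'I_dimH}.
Definition tensor (k : nat) := {ffun idx k -> F}.

Definition tscale k (c : F) (x : tensor k) : tensor k := [ffun i => c * x i].
Definition tadd k (x y : tensor k) : tensor k := [ffun i => x i + y i].

Definition el (h : H) : tensor 1 := [ffun ix : idx 1 => crd (ix ord0) h].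
Definition tcat k m (x : tensor k) (y : tensor m) : tensor (k + m) :=
  [ffun iz : idx (k + m) => x [ffun j => iz (lshift m j)] * y [ffun j => iz (rshift k j)]].
(* unit 1 (x) ... (x) 1 and componentwise product of H^{\otimes k} *)
Definition tone k : tensor k := [ffun iz : idx k => \prod_(j < k) crd (iz j) 1].
Definition tmul k (x y : tensor k) : tensor k :=
  [ffun iz : idx k => \sum_(ix : idx k) \sum_(iy : idx k)
     x ix * y iy * \prod_(j < k) crd (iz j) (bas (ix j) * bas (iy j))].
Definition lext k m (f : idx k -> tensor m) (x : tensor k) : tensor m :=
  [ffun iy => \sum_(ix : idx k) x ix * f ix iy].

Definition o0 {n} : 'I_n.+1 := @Ordinal n.+1 0 isT.
Definition o1 {n} : 'I_n.+2 := @Ordinal n.+2 1 isT.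
Definition o2 {n} : 'I_n.+3 := @Ordinal n.+3 2 isT.

Section Slots.
Variable Delta : H -> tensor 2.
Definition DeltaI (x : tensor 2) : tensor 3 :=
  lext (fun ix => tcat (Delta (bas (ix o0))) (el (bas (ix o1)))) x.
Definition IDelta (x : tensor 2) : tensor 3 :=
  lext (fun ix => tcat (el (bas (ix o0))) (Delta (bas (ix o1)))) x.
Definition IIDelta (x : tensor 3) : tensor 4 :=
  lext (fun ix => tcat (tcat (el (bas (ix o0))) (el (bas (ix o1))))
                       (Delta (bas (ix o2)))) x.
Definition DeltaII (x : tensor 3) : tensor 4 :=
  lext (fun ix => tcat (tcat (Delta (bas (ix o0))) (el (bas (ix o1))))
                       (el (bas (ix o2)))) x.
Definition IDeltaI (x : tensor 3) : tensor 4 :=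
  lext (fun ix => tcat (tcat (el (bas (ix o0))) (Delta (bas (ix o1))))
                       (el (bas (ix o2)))) x.
End Slots.

Definition dualH := 'Hom(H, F^o).
(* (h -> f)(g) = f(g h) *)
Definition hit (h : H) (f : dualH) : dualH := (f \o amulr h)%VF.

Record is_quasiHopf (Delta : H -> tensor 2) (eps : dualH)
    (phi phiinv : tensor 3) (S : H -> H) (alpha beta : H) : Prop := {
  qh_Delta_lin : forall (r : F) (h g : H),
    Delta (r *: h + g) = tadd (tscale r (Delta h)) (Delta g);
  qh_Delta_mul : forall h g, Delta (h * g) = tmul (Delta h) (Delta g);
  qh_Delta_one : Delta 1 = tone 2;
  qh_eps_mul : forall h g, eps (h * g) = eps h * eps g;
  qh_eps_one : eps 1 = 1;
  qh_phi_inv_r : tmul phi phiinv = tone 3;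
  qh_phi_inv_l : tmul phiinv phi = tone 3;
  qh_coassoc : forall h,
    tmul (tmul phi (DeltaI Delta (Delta h))) phiinv = IDelta Delta (Delta h);
  qh_counit_r : forall h,
    \sum_(ix : idx 2) (Delta h ix * eps (bas (ix o1))) *: bas (ix o0) = h;
  qh_counit_l : forall h,
    \sum_(ix : idx 2) (Delta h ix * eps (bas (ix o0))) *: bas (ix o1) = h;
  qh_cocycle :
    tmul (IIDelta Delta phi) (DeltaII Delta phi)
    = tmul (tmul (tcat (tone 1) phi) (IDeltaI Delta phi)) (tcat phi (tone 1));
  qh_phi_counit :
    lext (fun ix => tscale (eps (bas (ix o1)))
                      (tcat (el (bas (ix o0))) (el (bas (ix o2))))) phi
    = tone 2;
  qh_S_lin : forall (r : F) (h g : H), S (r *: h + g) = r *: S h + S g;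
  qh_S_mul : forall h g, S (h * g) = S g * S h;
  qh_S_one : S 1 = 1;
  qh_S_alpha : forall h,
    \sum_(ix : idx 2) Delta h ix *: (S (bas (ix o0)) * alpha * bas (ix o1))
    = eps h *: alpha;
  qh_S_beta : forall h,
    \sum_(ix : idx 2) Delta h ix *: (bas (ix o0) * beta * S (bas (ix o1)))
    = eps h *: beta;
  qh_phi_beta :
    \sum_(ix : idx 3)
       phi ix *: (bas (ix o0) * beta * S (bas (ix o1)) * alpha * bas (ix o2))
    = 1;
  qh_phiinv_alpha :
    \sum_(ix : idx 3)
       phiinv ix *: (S (bas (ix o0)) * alpha * bas (ix o1) * beta * S (bas (ix o2)))
    = 1;
  qh_eps_alpha : eps alpha = 1;
  qh_eps_beta : eps beta = 1 }.

Definition is_left_integral (eps : dualH) (t : H) : Prop :=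
  forall h : H, h * t = eps h *: t.

Section ModuleAlgebra.
Variables (Delta : H -> tensor 2) (eps : dualH) (phi : tensor 3).
Variables (A : lmodType F) (act : H -> A -> A) (mulA : A -> A -> A) (oneA : A).

(* left H-module algebra (multiplication not necessarily associative) *)
Record is_module_algebra : Prop := {
  ma_act_linl : forall (r : F) (h g : H) (a : A),
    act (r *: h + g) a = r *: act h a + act g a;
  ma_act_linr : forall (r : F) (h : H) (a b : A),
    act h (r *: a + b) = r *: act h a + act h b;
  ma_act_mul : forall (h g : H) (a : A), act (h * g) a = act h (act g a);
  ma_act_one : forall a : A, act 1 a = a;
  ma_mul_linl : forall (r : F) (a b c : A),
    mulA (r *: a + b) c = r *: mulA a c + mulA b c;
  ma_mul_linr : forall (r : F) (a b c : A),
    mulA a (r *: b + c) = r *: mulA a b + mulA a c;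
  ma_unit_l : forall a : A, mulA oneA a = a;
  ma_unit_r : forall a : A, mulA a oneA = a;
  ma_assoc : forall a b c : A,
    mulA (mulA a b) c
    = \sum_(ix : idx 3) phi ix *:
        mulA (act (bas (ix o0)) a)
             (mulA (act (bas (ix o1)) b) (act (bas (ix o2)) c));
  ma_act_mulA : forall (h : H) (a b : A),
    act h (mulA a b)
    = \sum_(ix : idx 2) Delta h ix *: mulA (act (bas (ix o0)) a) (act (bas (ix o1)) b);
  ma_act_oneA : forall h : H, act h oneA = eps h *: oneA }.

Definition Hinvariant (a : A) : Prop := forall h : H, act h a = eps h *: a.

(* Morita map (a,b) = t.[(p_L^1.a)(p_L^2.b)],
   p_L = X^2 S^-1(X^1 beta) (x) X^3 *)
Definition morita (Sinv : H -> H) (beta t : H) (a b : A) : A :=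
  act t (\sum_(ix : idx 3) phi ix *:
           mulA (act (bas (ix o1) * Sinv (bas (ix o0) * beta)) a)
                (act (bas (ix o2)) b)).

Definition total_integral (Phi : dualH -> A) : Prop :=
  [/\ forall (r : F) (f g : dualH), Phi (r *: f + g) = r *: Phi f + Phi g,
      forall (h : H) (f : dualH), Phi (hit h f) = act h (Phi f)
    & Phi eps = oneA].
End ModuleAlgebra.

End QuasiHopf.

From HB Require Import structures.
From mathcomp Require Import all_boot all_order all_algebra.
From mathcomp Require Import falgebra.
From mathcomp Require Import ring.
Set Implicit Arguments. Unset Strict Implicit. Unset Printing Implicit Defensive.
Import GRing.Theory.
Local Open Scope ring_scope.

(* The Morita map satisfies [(1_A, b) = t.b], because [p_L^1 . 1_A = eps(p_L^1) 1_A]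
   and [(eps ⊗ eps ⊗ id)(phi) = 1]; moreover [t.(x a) = x (t.a)] for [x] in [B].
   So if [t.a = 1_A] then every [x] in [B] equals [(1_A, x a)]; conversely,
   surjectivity at [1_A] yields a trace one element.  A total integral [Phi] gives
   the trace one element [Phi f] for any [f] with [t ⇀ f = eps], which exists since
   [t <> 0] and [h t = eps(h) t].  From a trace one element [a] one gets the total
   integral [f |-> f(S^-1(S(x^1) alpha x^2 t_1)) x^3 t_2 . a]: it sends [eps] to
   [t.a = 1_A], and its [H]-linearity comes from quasi-coassociativity combined
   with the integral property of [t]. *)

Section LinearFunctions.
Variables (R : comPzRingType) (U V W : lmodType R).

Lemma lin0 (f : V -> W) : linear f -> f 0 = 0.
Proof.
move=> Hf; have := Hf (-1) 0 0.
by rewrite scaler0 addr0 scaleN1r addNr.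
Qed.

Lemma linD (f : V -> W) : linear f -> forall u v, f (u + v) = f u + f v.
Proof. by move=> Hf u v; have := Hf 1 u v; rewrite !scale1r. Qed.

Lemma linZ (f : V -> W) : linear f -> forall r u, f (r *: u) = r *: f u.
Proof. by move=> Hf r u; rewrite -[r *: u]addr0 Hf lin0 // addr0. Qed.

Lemma lin_sum (f : V -> W) : linear f ->
  forall (I : Type) (s : seq I) (P : pred I) (g : I -> V),
  f (\sum_(i <- s | P i) g i) = \sum_(i <- s | P i) f (g i).
Proof. by move=> Hf I s P g; apply: (big_morph f (linD Hf) (lin0 Hf)). Qed.

Lemma lin_comp (f : V -> W) (g : U -> V) :
  linear f -> linear g -> linear (fun u => f (g u)).
Proof. by move=> Hf Hg r u v; rewrite Hg Hf. Qed.

Lemma lin_sumf (I : Type) (s : seq I) (P : pred I) (g : I -> V -> W) :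
  (forall i, linear (g i)) -> linear (fun u => \sum_(i <- s | P i) g i u).
Proof.
move=> Hg r u v; rewrite scaler_sumr -big_split /=.
by apply: eq_bigr => i _; rewrite Hg.
Qed.

Lemma lin_scaler (k : R) (g : V -> W) : linear g -> linear (fun u => k *: g u).
Proof. by move=> Hg r u v; rewrite Hg scalerDr !scalerA mulrC. Qed.

Lemma lin_scalel (g : V -> R^o) (w : W) : linear g -> linear (fun u => g u *: w).
Proof. by move=> Hg r u v; rewrite Hg scalerDl scalerA. Qed.

End LinearFunctions.

Section Tensors.
Variables (F : fieldType) (H : falgType F).
Local Notation bas := (@bas F H).
Local Notation crd := (@crd F H).
Local Notation dimH := (@dimH F H).
Local Notation idx := (@idx F H).
Local Notation tensor := (@tensor F H).

Lemma bas_expand (h : H) : h = \sum_i crd i h *: bas i.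
Proof.
rewrite {1}(coord_vbasis (memvf h)); apply: eq_bigr => i _.
by rewrite /crd /bas (tnth_nth 0).
Qed.

Lemma crd_bas i j : crd j (bas i) = (i == j)%:R.
Proof.
rewrite /crd /bas (tnth_nth 0) coord_free //.
exact: basis_free (vbasisP _).
Qed.

Lemma crd_neq0 (h : H) : h != 0 -> exists i, crd i h != 0.
Proof.
move=> hn0; apply/existsP; apply: contraR hn0; rewrite negb_exists => /forallP z.
rewrite (bas_expand h) big1 // => i _.
by move: (z i); rewrite negbK => /eqP ->; rewrite scale0r.
Qed.

Lemma sum_crd_bas (V : lmodType F) j (g : 'I_dimH -> V) :
  \sum_i crd i (bas j) *: g i = g j.
Proof.
rewrite (bigD1 j) //= big1 => [|i /negbTE ne].
  by rewrite crd_bas eqxx scale1r addr0.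
by rewrite crd_bas eq_sym ne scale0r.
Qed.

Lemma lin_bas_expand (V : lmodType F) (f : H -> V) : linear f ->
  forall u, f u = \sum_i crd i u *: f (bas i).
Proof.
move=> Hf u; rewrite {1}(bas_expand u) lin_sum //.
by apply: eq_bigr => i _; rewrite linZ.
Qed.

Lemma lin_mulr (m : H) : linear (fun u : H => u * m).
Proof. by move=> r u v; rewrite mulrDl scalerAl. Qed.

Lemma lin_mull (m : H) : linear (fun u : H => m * u).
Proof. by move=> r u v; rewrite mulrDr scalerAr. Qed.

Lemma ffun_ord_congr n (ix : {ffun 'I_n -> 'I_dimH}) (j j' : 'I_n) :
  j = j' :> nat -> ix j = ix j'.
Proof. by move=> e; congr (ix _); apply: val_inj. Qed.

Definition ix1 (i : 'I_dimH) : idx 1 := [ffun _ => i].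
Definition ix2 (i j : 'I_dimH) : idx 2 :=
  [ffun z : 'I_2 => if nat_of_ord z == 0%N then i else j].
Definition ix3 (i j k : 'I_dimH) : idx 3 :=
  [ffun z : 'I_3 => if nat_of_ord z == 0%N then i
                    else if nat_of_ord z == 1%N then j else k].

Lemma ix2_0 i j : ix2 i j o0 = i. Proof. by rewrite ffunE. Qed.
Lemma ix2_1 i j : ix2 i j o1 = j. Proof. by rewrite ffunE. Qed.
Lemma ix3_0 i j k : ix3 i j k o0 = i. Proof. by rewrite ffunE. Qed.
Lemma ix3_1 i j k : ix3 i j k o1 = j. Proof. by rewrite ffunE. Qed.
Lemma ix3_2 i j k : ix3 i j k o2 = k. Proof. by rewrite ffunE. Qed.

Lemma sum_idx2 (V : zmodType) (G : idx 2 -> V) :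
  \sum_(ix : idx 2) G ix = \sum_i \sum_j G (ix2 i j).
Proof.
rewrite pair_bigA /= (reindex (fun p => ix2 p.1 p.2)) //.
exists (fun ix : idx 2 => (ix o0, ix o1)) => [[i j] _|ix _].
  by rewrite ix2_0 ix2_1.
apply/ffunP => z; rewrite /ix2 ffunE.
by case: z => [[|[|m]] Hz] //=; apply: ffun_ord_congr.
Qed.

Lemma sum_idx3 (V : zmodType) (G : idx 3 -> V) :
  \sum_(ix : idx 3) G ix = \sum_i \sum_j \sum_k G (ix3 i j k).
Proof.
transitivity (\sum_i \sum_(p : 'I_dimH * 'I_dimH) G (ix3 i p.1 p.2)); last first.
  by apply: eq_bigr => i _; rewrite pair_bigA.
rewrite pair_bigA /=.
rewrite (reindex (fun p : 'I_dimH * ('I_dimH * 'I_dimH) => ix3 p.1 p.2.1 p.2.2)) //.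
exists (fun ix : idx 3 => (ix o0, (ix o1, ix o2))) => [[i [j k]] _|ix _].
  by rewrite ix3_0 ix3_1 ix3_2.
apply/ffunP => z; rewrite /ix3 ffunE.
by case: z => [[|[|[|m]]] Hz] //=; apply: ffun_ord_congr.
Qed.

Lemma big_ord2_prod (f : 'I_2 -> F) : \prod_(j < 2) f j = f o0 * f o1.
Proof.
by rewrite !big_ord_recl big_ord0 mulr1; congr (f _ * f _); apply: val_inj.
Qed.

Lemma big_ord3_prod (f : 'I_3 -> F) : \prod_(j < 3) f j = f o0 * f o1 * f o2.
Proof.
rewrite !big_ord_recl big_ord0 mulr1 mulrA.
by congr (f _ * f _ * f _); apply: val_inj.
Qed.

Lemma ix3_lshift1 i j k : [ffun z : 'I_1 => ix3 i j k (lshift 2 z)] = ix1 i.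
Proof. by apply/ffunP => z; rewrite !ffunE (ord1 z). Qed.
Lemma ix3_rshift1 i j k : [ffun z : 'I_2 => ix3 i j k (rshift 1 z)] = ix2 j k.
Proof. by apply/ffunP => z; rewrite !ffunE; case: z => [[|[|m]] Hz]. Qed.
Lemma ix3_lshift2 i j k : [ffun z : 'I_2 => ix3 i j k (lshift 1 z)] = ix2 i j.
Proof. by apply/ffunP => z; rewrite !ffunE; case: z => [[|[|m]] Hz]. Qed.
Lemma ix3_rshift2 i j k : [ffun z : 'I_1 => ix3 i j k (rshift 2 z)] = ix1 k.
Proof. by apply/ffunP => z; rewrite !ffunE (ord1 z). Qed.
Lemma ix2_lshift i j : [ffun z : 'I_1 => ix2 i j (lshift 1 z)] = ix1 i.
Proof. by apply/ffunP => z; rewrite !ffunE (ord1 z). Qed.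
Lemma ix2_rshift i j : [ffun z : 'I_1 => ix2 i j (rshift 1 z)] = ix1 j.
Proof. by apply/ffunP => z; rewrite !ffunE (ord1 z). Qed.
Lemma el_ix1 h i : el h (ix1 i) = crd i h.
Proof. by rewrite !ffunE. Qed.

Definition bilin (V : lmodType F) (G : H -> H -> V) :=
  (forall q, linear (fun p => G p q)) /\ (forall p, linear (G p)).
Definition trilin (V : lmodType F) (K : H -> H -> H -> V) :=
  [/\ forall v w, linear (fun u => K u v w), forall u w, linear (fun v => K u v w)
    & forall u v, linear (K u v)].

(* A tensor [x] is only ever observed through [ev2 G x] (resp. [ev3 K x]), the
   image of [x] under the linear map induced by the multilinear map [G] (resp.
   [K]); e.g. [ev2 (fun u v => S u * alpha * v) (Delta h)] is [S(h_1) alpha h_2]. *)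
Definition ev2 (V : lmodType F) (G : H -> H -> V) (x : tensor 2) : V :=
  \sum_(ix : idx 2) x ix *: G (bas (ix o0)) (bas (ix o1)).
Definition ev3 (V : lmodType F) (K : H -> H -> H -> V) (x : tensor 3) : V :=
  \sum_(ix : idx 3) x ix *: K (bas (ix o0)) (bas (ix o1)) (bas (ix o2)).

Section Pairing.
Variable V : lmodType F.

Lemma ev2E (G : H -> H -> V) x :
  ev2 G x = \sum_i \sum_j x (ix2 i j) *: G (bas i) (bas j).
Proof.
by rewrite /ev2 sum_idx2; do 2!apply: eq_bigr => ? _; rewrite ix2_0 ix2_1.
Qed.

Lemma ev3E (K : H -> H -> H -> V) x :
  ev3 K x = \sum_i \sum_j \sum_k x (ix3 i j k) *: K (bas i) (bas j) (bas k).
Proof.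
by rewrite /ev3 sum_idx3; do 3!apply: eq_bigr => ? _; rewrite ix3_0 ix3_1 ix3_2.
Qed.

Lemma eq_ev2 (G G' : H -> H -> V) x :
  (forall u v, G u v = G' u v) -> ev2 G x = ev2 G' x.
Proof. by move=> e; apply: eq_bigr => ix _; rewrite e. Qed.

Lemma eq_ev3 (K K' : H -> H -> H -> V) x :
  (forall u v w, K u v w = K' u v w) -> ev3 K x = ev3 K' x.
Proof. by move=> e; apply: eq_bigr => ix _; rewrite e. Qed.

Lemma bilin_bas_expand (G : H -> H -> V) : bilin G -> forall p q,
  \sum_i \sum_j (crd i p * crd j q) *: G (bas i) (bas j) = G p q.
Proof.
case=> G1 G2 p q.
rewrite [RHS](lin_bas_expand (G1 q)); apply: eq_bigr => i _.
rewrite (lin_bas_expand (G2 (bas i)) q) scaler_sumr; apply: eq_bigr => j _.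
by rewrite scalerA.
Qed.

Lemma trilin_bas_expand (K : H -> H -> H -> V) : trilin K -> forall p q r,
  \sum_i \sum_j \sum_k (crd i p * crd j q * crd k r) *: K (bas i) (bas j) (bas k)
  = K p q r.
Proof.
case=> K1 K2 K3 p q r.
rewrite [RHS](lin_bas_expand (K1 q r)); apply: eq_bigr => i _.
rewrite (lin_bas_expand (K2 (bas i) r) q) scaler_sumr; apply: eq_bigr => j _.
rewrite (lin_bas_expand (K3 (bas i) (bas j)) r) !scaler_sumr; apply: eq_bigr => k _.
by rewrite !scalerA.
Qed.

Lemma ev2_tmul (G : H -> H -> V) : bilin G -> forall x y,
  ev2 G (tmul x y) = ev2 (fun u v => ev2 (fun u' v' => G (u * u') (v * v')) y) x.
Proof.
move=> bG x y.
rewrite /ev2; under eq_bigr do rewrite ffunE scaler_suml.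
rewrite exchange_big; apply: eq_bigr => ix _.
under eq_bigr do rewrite scaler_suml.
rewrite exchange_big scaler_sumr; apply: eq_bigr => iy _.
rewrite scalerA -(bilin_bas_expand bG).
rewrite (sum_idx2 (fun iz =>
  (x ix * y iy * \prod_(j < 2) crd (iz j) (bas (ix j) * bas (iy j)))
     *: G (bas (iz o0)) (bas (iz o1)))).
rewrite scaler_sumr; apply: eq_bigr => i _; rewrite scaler_sumr; apply: eq_bigr => j _.
by rewrite big_ord2_prod !ix2_0 !ix2_1 !scalerA !mulrA.
Qed.

Lemma ev3_tmul (K : H -> H -> H -> V) : trilin K -> forall x y,
  ev3 K (tmul x y)
  = ev3 (fun u v w => ev3 (fun u' v' w' => K (u * u') (v * v') (w * w')) y) x.
Proof.
move=> tK x y.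
rewrite /ev3; under eq_bigr do rewrite ffunE scaler_suml.
rewrite exchange_big; apply: eq_bigr => ix _.
under eq_bigr do rewrite scaler_suml.
rewrite exchange_big scaler_sumr; apply: eq_bigr => iy _.
rewrite scalerA -(trilin_bas_expand tK).
rewrite (sum_idx3 (fun iz =>
  (x ix * y iy * \prod_(j < 3) crd (iz j) (bas (ix j) * bas (iy j)))
     *: K (bas (iz o0)) (bas (iz o1)) (bas (iz o2)))).
rewrite scaler_sumr; apply: eq_bigr => i _; rewrite scaler_sumr; apply: eq_bigr => j _.
rewrite scaler_sumr; apply: eq_bigr => k _.
by rewrite big_ord3_prod !ix3_0 !ix3_1 !ix3_2 !scalerA !mulrA.
Qed.

Lemma ev2_tone (G : H -> H -> V) : bilin G -> ev2 G (tone H 2) = G 1 1.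
Proof.
move=> bG; rewrite ev2E -(bilin_bas_expand bG); do 2!apply: eq_bigr => ? _.
by rewrite ffunE big_ord2_prod ix2_0 ix2_1.
Qed.

Lemma ev3_tone (K : H -> H -> H -> V) : trilin K -> ev3 K (tone H 3) = K 1 1 1.
Proof.
move=> tK; rewrite ev3E -(trilin_bas_expand tK); do 3!apply: eq_bigr => ? _.
by rewrite ffunE big_ord3_prod ix3_0 ix3_1 ix3_2.
Qed.

Lemma ev2_lext k (f : idx k -> tensor 2) (G : H -> H -> V) x :
  ev2 G (lext f x) = \sum_ix x ix *: ev2 G (f ix).
Proof.
rewrite /ev2; under eq_bigr do rewrite ffunE scaler_suml.
rewrite exchange_big; apply: eq_bigr => ix _.
by rewrite scaler_sumr; apply: eq_bigr => iz _; rewrite scalerA.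
Qed.

Lemma ev3_lext k (f : idx k -> tensor 3) (K : H -> H -> H -> V) x :
  ev3 K (lext f x) = \sum_ix x ix *: ev3 K (f ix).
Proof.
rewrite /ev3; under eq_bigr do rewrite ffunE scaler_suml.
rewrite exchange_big; apply: eq_bigr => ix _.
by rewrite scaler_sumr; apply: eq_bigr => iz _; rewrite scalerA.
Qed.

Lemma ev2_tscale r (x : tensor 2) (G : H -> H -> V) :
  ev2 G (tscale r x) = r *: ev2 G x.
Proof. by rewrite /ev2 scaler_sumr; apply: eq_bigr => ix _; rewrite ffunE scalerA. Qed.

Lemma ev2_tadd (x y : tensor 2) (G : H -> H -> V) :
  ev2 G (tadd x y) = ev2 G x + ev2 G y.
Proof. by rewrite /ev2 -big_split; apply: eq_bigr => ix _; rewrite ffunE scalerDl. Qed.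

Lemma ev2_tcat_el u w (G : H -> H -> V) :
  ev2 G (tcat (el (bas u)) (el (bas w))) = G (bas u) (bas w).
Proof.
rewrite ev2E -(sum_crd_bas u (fun i => G (bas i) (bas w))); apply: eq_bigr => i _.
rewrite -(sum_crd_bas w (fun j => G (bas i) (bas j))) scaler_sumr.
apply: eq_bigr => j _.
by rewrite ffunE ix2_lshift ix2_rshift !el_ix1 scalerA.
Qed.

Lemma ev3_el_tcat w (y : tensor 2) (K : H -> H -> H -> V) :
  ev3 K (tcat (el (bas w)) y) = ev2 (K (bas w)) y.
Proof.
rewrite ev3E ev2E.
rewrite -(sum_crd_bas w (fun i => \sum_j \sum_k y (ix2 j k) *: K (bas i) (bas j) (bas k))).
apply: eq_bigr => i _; rewrite scaler_sumr; apply: eq_bigr => j _.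
rewrite scaler_sumr; apply: eq_bigr => k _.
by rewrite ffunE ix3_lshift1 ix3_rshift1 el_ix1 scalerA.
Qed.

Lemma ev3_tcat_el w (y : tensor 2) (K : H -> H -> H -> V) :
  ev3 K (tcat y (el (bas w))) = ev2 (fun p q => K p q (bas w)) y.
Proof.
rewrite ev3E ev2E; apply: eq_bigr => i _; apply: eq_bigr => j _.
rewrite -(sum_crd_bas w (fun k => y (ix2 i j) *: K (bas i) (bas j) (bas k))).
by apply: eq_bigr => k _; rewrite ffunE ix3_lshift2 ix3_rshift2 el_ix1 scalerA mulrC.
Qed.

Lemma ev3_IDelta (D : H -> tensor 2) (K : H -> H -> H -> V) y :
  ev3 K (IDelta D y) = ev2 (fun u v => ev2 (K u) (D v)) y.
Proof. by rewrite /IDelta ev3_lext; apply: eq_bigr => ix _; rewrite ev3_el_tcat. Qed.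

Lemma ev3_DeltaI (D : H -> tensor 2) (K : H -> H -> H -> V) y :
  ev3 K (DeltaI D y) = ev2 (fun u v => ev2 (fun p q => K p q v) (D u)) y.
Proof. by rewrite /DeltaI ev3_lext; apply: eq_bigr => ix _; rewrite ev3_tcat_el. Qed.

Lemma lin_ev2 (U : lmodType F) (G : U -> H -> H -> V) x :
  (forall p q, linear (fun m => G m p q)) -> linear (fun m => ev2 (G m) x).
Proof. by move=> hG; apply: lin_sumf => ix; apply: lin_scaler. Qed.

Lemma lin_ev3 (U : lmodType F) (K : U -> H -> H -> H -> V) x :
  (forall p q r, linear (fun m => K m p q r)) -> linear (fun m => ev3 (K m) x).
Proof. by move=> hK; apply: lin_sumf => ix; apply: lin_scaler. Qed.

Lemma trilin_mull (K : H -> H -> H -> V) a b c :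
  trilin K -> trilin (fun u v w => K (a * u) (b * v) (c * w)).
Proof.
case=> K1 K2 K3; split=> *.
- exact: lin_comp (K1 _ _) (lin_mull _).
- exact: lin_comp (K2 _ _) (lin_mull _).
- exact: lin_comp (K3 _ _) (lin_mull _).
Qed.

Lemma trilin_mulr (K : H -> H -> H -> V) a b c :
  trilin K -> trilin (fun u v w => K (u * a) (v * b) (w * c)).
Proof.
case=> K1 K2 K3; split=> *.
- exact: lin_comp (K1 _ _) (lin_mulr _).
- exact: lin_comp (K2 _ _) (lin_mulr _).
- exact: lin_comp (K3 _ _) (lin_mulr _).
Qed.

Lemma trilin_ev3 (L : H -> H -> H -> H -> H -> H -> V) y :
  (forall a b c, trilin (fun u v w => L u v w a b c)) ->
  trilin (fun u v w => ev3 (L u v w) y).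
Proof.
move=> hL; split=> [v w|u w|u v].
- by apply: (@lin_ev3 _ (fun m => L m v w)) => p q r; case: (hL p q r).
- by apply: (@lin_ev3 _ (fun m => L u m w)) => p q r; case: (hL p q r).
- by apply: (@lin_ev3 _ (fun m => L u v m)) => p q r; case: (hL p q r).
Qed.

End Pairing.

Lemma lin_ev2_out (V W : lmodType F) (f : V -> W) (G : H -> H -> V) x :
  linear f -> f (ev2 G x) = ev2 (fun u v => f (G u v)) x.
Proof. by move=> hf; rewrite /ev2 lin_sum //; apply: eq_bigr => ix _; rewrite linZ. Qed.

Lemma lin_ev3_out (V W : lmodType F) (f : V -> W) (K : H -> H -> H -> V) x :
  linear f -> f (ev3 K x) = ev3 (fun u v w => f (K u v w)) x.
Proof. by move=> hf; rewrite /ev3 lin_sum //; apply: eq_bigr => ix _; rewrite linZ. Qed.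


Section QuasiHopf.
Variables (Delta : H -> tensor 2) (eps : dualH H) (phi phiinv : tensor 3)
  (S Sinv : H -> H) (alpha beta : H).
Hypothesis qh : is_quasiHopf Delta eps phi phiinv S alpha beta.
Hypotheses (SK : cancel S Sinv) (SinvK : cancel Sinv S).

Lemma eps_lin : linear (fun u : H => eps u : F^o).
Proof. exact: linearP. Qed.

Lemma Sinv_lin : linear Sinv.
Proof. by move=> r u v; apply: (can_inj SK); rewrite SinvK (qh_S_lin qh) !SinvK. Qed.

Lemma SinvM u v : Sinv (u * v) = Sinv v * Sinv u.
Proof. by apply: (can_inj SK); rewrite SinvK (qh_S_mul qh) !SinvK. Qed.

Section Counit.
Variable V : lmodType F.

Lemma ev2_DeltaZ (G : H -> H -> V) r h :
  ev2 G (Delta (r *: h)) = r *: ev2 G (Delta h).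
Proof.
have D0 : ev2 G (Delta 0) = 0.
  have := congr1 (ev2 G) (qh_Delta_lin qh (-1) 0 0).
  by rewrite scaler0 addr0 ev2_tadd ev2_tscale scaleN1r addNr.
by rewrite -[r *: h]addr0 (qh_Delta_lin qh) ev2_tadd ev2_tscale D0 addr0.
Qed.

Lemma ev2_counit_r (f : H -> V) h : linear f ->
  ev2 (fun u v => eps v *: f u) (Delta h) = f h.
Proof.
move=> hf; rewrite -{2}(qh_counit_r qh h) lin_sum //.
by apply: eq_bigr => ix _; rewrite /= (linZ hf) scalerA.
Qed.

Lemma ev2_counit_l (f : H -> V) h : linear f ->
  ev2 (fun u v => eps u *: f v) (Delta h) = f h.
Proof.
move=> hf; rewrite -{2}(qh_counit_l qh h) lin_sum //.
by apply: eq_bigr => ix _; rewrite /= (linZ hf) scalerA.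
Qed.

Lemma ev2_S_alpha (f : H -> V) h : linear f ->
  ev2 (fun u v => f (S u * alpha * v)) (Delta h) = eps h *: f alpha.
Proof.
move=> hf; rewrite -(linZ hf) -(qh_S_alpha qh h) lin_sum //.
by apply: eq_bigr => ix _; rewrite (linZ hf).
Qed.

End Counit.

Lemma epsS h : eps (S h) = eps h.
Proof.
have := ev2_S_alpha h eps_lin; rewrite (qh_eps_alpha qh) /= => E.
have E1 : eps h *: (1 : F^o) = eps h by rewrite /GRing.scale /= mulr1.
rewrite -E1 -E -(ev2_counit_r h (lin_comp eps_lin (qh_S_lin qh))).
by apply: eq_ev2 => u v; rewrite !(qh_eps_mul qh) (qh_eps_alpha qh) mulr1 mulrC.
Qed.

Lemma epsSinv h : eps (Sinv h) = eps h.
Proof. by rewrite -{2}(SinvK h) epsS. Qed.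

Definition epsepsI (x : tensor 3) : H := ev3 (fun u v w => eps u *: (eps v *: w)) x.

Lemma trilin_epsepsI : trilin (fun u v w : H => eps u *: (eps v *: w)).
Proof.
split=> [v w|u w|u v].
- exact: lin_scalel _ eps_lin.
- exact: lin_scaler (lin_scalel _ eps_lin).
- exact: lin_scaler (lin_scaler _ (fun r a b => erefl)).
Qed.

Lemma epsepsI_phi : epsepsI phi = 1.
Proof.
have bG : bilin (fun u v : H => eps u *: v).
  by split=> [q|p]; [exact: lin_scalel eps_lin | exact: lin_scaler (fun r a b => erefl)].
have := congr1 (ev2 (fun u v : H => eps u *: v)) (qh_phi_counit qh).
rewrite ev2_tone // (qh_eps_one qh) scale1r ev2_lext => <-.
apply: eq_bigr => ix _; congr (_ *: _).
by rewrite ev2_tscale ev2_tcat_el scalerA scalerA mulrC -scalerA.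
Qed.

Lemma epsepsI_tmul x y : epsepsI (tmul x y) = epsepsI x * epsepsI y.
Proof.
rewrite /epsepsI ev3_tmul; last exact: trilin_epsepsI.
rewrite (lin_ev3_out _ _ (lin_mulr _)); apply: eq_ev3 => u v w.
rewrite (lin_ev3_out _ _ (lin_mull _)); apply: eq_ev3 => u' v' w'.
rewrite !(qh_eps_mul qh) -!scalerAl -!scalerAr !scalerA; congr (_ *: _).
by rewrite mulrACA.
Qed.

Lemma epsepsI_phiinv : epsepsI phiinv = 1.
Proof.
have epsepsI1 : epsepsI (tone H 3) = 1.
  by rewrite /epsepsI ev3_tone /= ?(qh_eps_one qh) ?scale1r //; exact: trilin_epsepsI.
by rewrite -[RHS]epsepsI1 -(qh_phi_inv_r qh) epsepsI_tmul epsepsI_phi mul1r.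
Qed.

Section Integral.
Variable V : lmodType F.

Lemma ev3_coassoc (K : H -> H -> H -> V) h : trilin K ->
  ev3 K (tmul phiinv (IDelta Delta (Delta h)))
  = ev3 K (tmul (DeltaI Delta (Delta h)) phiinv).
Proof.
move=> tK.
pose M a b c := ev3 (fun z1 z2 z3 => ev3 (fun w1 w2 w3 =>
   K (a * (z1 * w1)) (b * (z2 * w2)) (c * (z3 * w3))) phiinv) (DeltaI Delta (Delta h)).
have tM : trilin M.
  apply: (trilin_ev3 (L := fun a b c z1 z2 z3 => ev3 (fun w1 w2 w3 =>
   K (a * (z1 * w1)) (b * (z2 * w2)) (c * (z3 * w3))) phiinv)) => z1 z2 z3.
  apply: (trilin_ev3 (L := fun a b c w1 w2 w3 =>
   K (a * (z1 * w1)) (b * (z2 * w2)) (c * (z3 * w3)))) => w1 w2 w3.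
  exact: trilin_mulr.
have -> : ev3 K (tmul (DeltaI Delta (Delta h)) phiinv) = ev3 M (tmul phiinv phi).
  rewrite (qh_phi_inv_l qh) ev3_tone // /M ev3_tmul //.
  by apply: eq_ev3 => z1 z2 z3; apply: eq_ev3 => w1 w2 w3; rewrite !mul1r.
rewrite ev3_tmul // ev3_tmul //; apply: eq_ev3 => x1 x2 x3.
rewrite -(qh_coassoc qh h) ev3_tmul; last exact: trilin_mull.
rewrite ev3_tmul; last first.
  apply: (trilin_ev3 (L := fun u v w u' v' w' =>
     K (x1 * (u * u')) (x2 * (v * v')) (x3 * (w * w')))) => a b c.
  exact: (trilin_mulr (K := fun u v w => K (x1 * u) (x2 * v) (x3 * w)) a b c
            (trilin_mull _ _ _ tK)).
apply: eq_ev3 => p1 p2 p3; rewrite /M.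
by apply: eq_ev3 => z1 z2 z3; apply: eq_ev3 => w1 w2 w3; rewrite !mulrA.
Qed.

Variable t : H.

Definition integral_kernel (G : H -> H -> V) (u v w : H) : V :=
  ev2 (fun p q => G (S u * alpha * v * p) (w * q)) (Delta t).

Variable G : H -> H -> V.
Hypotheses (t_integral : is_left_integral eps t) (bG : bilin G).

Lemma trilin_integral_kernel : trilin (integral_kernel G).
Proof.
case: bG => G1 G2; split=> [v w|u w|u v].
- apply: (@lin_ev2 _ _ (fun m p q => G (S m * alpha * v * p) (w * q))) => p q.
  exact: lin_comp (G1 _) (lin_comp (lin_mulr p) (lin_comp (lin_mulr v)
                    (lin_comp (lin_mulr alpha) (qh_S_lin qh)))).
- apply: (@lin_ev2 _ _ (fun m p q => G (S u * alpha * m * p) (w * q))) => p q.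
  exact: lin_comp (G1 _) (lin_comp (lin_mulr p) (lin_mull (S u * alpha))).
- apply: (@lin_ev2 _ _ (fun m p q => G (S u * alpha * v * p) (m * q))) => p q.
  exact: lin_comp (G2 _) (lin_mulr q).
Qed.

Lemma ev3_integral_kernel_IDelta h :
  ev3 (integral_kernel G) (tmul phiinv (IDelta Delta (Delta h)))
  = ev3 (integral_kernel (fun p q => G (S h * p) q)) phiinv.
Proof.
case: (bG) => G1 G2.
rewrite ev3_tmul; last exact: trilin_integral_kernel.
apply: eq_ev3 => x1 x2 x3; rewrite ev3_IDelta.
pose f u := ev2 (fun p q => G (S u * (S x1 * alpha * x2 * p)) (x3 * q)) (Delta t).
have lf : linear f.
  apply: (@lin_ev2 _ _ (fun m p q => G (S m * (S x1 * alpha * x2 * p)) (x3 * q))) => p q.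
  exact: lin_comp (G1 _) (lin_comp (lin_mulr _) (qh_S_lin qh)).
transitivity (f h); last by [].
rewrite -(ev2_counit_r h lf); apply: eq_ev2 => u v.
pose G' p q := G (S u * S x1 * alpha * x2 * p) (x3 * q).
have bG' : bilin G'.
  by split=> [q|p]; [exact: lin_comp (G1 _) (lin_mull _) | exact: lin_comp (G2 _) (lin_mull _)].
transitivity (ev2 G' (Delta (v * t))).
  rewrite (qh_Delta_mul qh) ev2_tmul //; apply: eq_ev2 => p q.
  by apply: eq_ev2 => c0 c1; rewrite /G' (qh_S_mul qh) !mulrA.
rewrite t_integral ev2_DeltaZ; congr (_ *: _).
by apply: eq_ev2 => c0 c1; rewrite /G' !mulrA.
Qed.

Lemma ev3_integral_kernel_DeltaI h :
  ev3 (integral_kernel G) (tmul (DeltaI Delta (Delta h)) phiinv)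
  = ev3 (integral_kernel (fun p q => G p (h * q))) phiinv.
Proof.
case: (bG) => G1 G2.
rewrite ev3_tmul; last exact: trilin_integral_kernel.
rewrite ev3_DeltaI.
pose f m := ev3 (fun x1 x2 x3 => ev2 (fun p q =>
               G (S x1 * alpha * x2 * p) (m * x3 * q)) (Delta t)) phiinv.
have lf : linear f.
  apply: (@lin_ev3 _ _ (fun m x1 x2 x3 => ev2 (fun p q =>
               G (S x1 * alpha * x2 * p) (m * x3 * q)) (Delta t))) => x1 x2 x3.
  apply: (@lin_ev2 _ _ (fun m p q => G (S x1 * alpha * x2 * p) (m * x3 * q))) => p q.
  exact: lin_comp (G2 _) (lin_comp (lin_mulr _) (lin_mulr _)).
transitivity (f h); last first.
  by apply: eq_ev3 => x1 x2 x3; apply: eq_ev2 => p q; rewrite !mulrA.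
rewrite -(ev2_counit_l h lf); apply: eq_ev2 => u v.
pose g m := ev3 (fun x1 x2 x3 => ev2 (fun p q =>
               G (S x1 * m * x2 * p) (v * x3 * q)) (Delta t)) phiinv.
have lg : linear g.
  apply: (@lin_ev3 _ _ (fun m x1 x2 x3 => ev2 (fun p q =>
               G (S x1 * m * x2 * p) (v * x3 * q)) (Delta t))) => x1 x2 x3.
  apply: (@lin_ev2 _ _ (fun m p q => G (S x1 * m * x2 * p) (v * x3 * q))) => p q.
  exact: lin_comp (G1 _) (lin_comp (lin_mulr _) (lin_comp (lin_mulr _) (lin_mull _))).
transitivity (eps u *: g alpha); last by [].
rewrite -(ev2_S_alpha u lg); apply: eq_ev2 => p q.
apply: eq_ev3 => x1 x2 x3; apply: eq_ev2 => c0 c1.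
by rewrite (qh_S_mul qh) !mulrA.
Qed.

Lemma integral_transfer h :
  ev3 (integral_kernel (fun p q => G (S h * p) q)) phiinv
  = ev3 (integral_kernel (fun p q => G p (h * q))) phiinv.
Proof.
rewrite -ev3_integral_kernel_IDelta -ev3_integral_kernel_DeltaI.
exact: ev3_coassoc trilin_integral_kernel.
Qed.

End Integral.

Lemma hit_integral_eps (t : H) : t != 0 -> is_left_integral eps t ->
  exists f : dualH H, hit t f = eps.
Proof.
move=> tn0 t_integral; have [i ci] := crd_neq0 tn0.
exists ((crd i t)^-1 *: linfun (coord (vbasis {:H}) i : H -> F^o)).
apply/lfunP => g; rewrite comp_lfunE scale_lfunE !lfunE /= t_integral linearZ /=.
by rewrite /GRing.scale /= mulrCA (mulVf ci) mulr1.
Qed.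

Section ModuleAlgebra.
Variables (A : lmodType F) (act : H -> A -> A) (mulA : A -> A -> A) (oneA : A).
Hypothesis hMA : is_module_algebra Delta eps phi act mulA oneA.

Lemma lin_actl a : linear (fun h => act h a).
Proof. by move=> r u v; rewrite (ma_act_linl hMA). Qed.

Lemma lin_actr h : linear (act h).
Proof. by move=> r u v; rewrite (ma_act_linr hMA). Qed.

Lemma lin_mulAl b : linear (fun a => mulA a b).
Proof. by move=> r u v; rewrite (ma_mul_linl hMA). Qed.

Lemma lin_mulAr a : linear (mulA a).
Proof. by move=> r u v; rewrite (ma_mul_linr hMA). Qed.

Lemma act_mul_invariant (h : H) (x a : A) :
  Hinvariant eps act x -> act h (mulA x a) = mulA x (act h a).
Proof.
move=> x_inv; rewrite (ma_act_mulA hMA).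
transitivity (ev2 (fun u v => eps u *: mulA x (act v a)) (Delta h)).
  by apply: eq_bigr => ix _; rewrite x_inv (linZ (lin_mulAl _)).
exact: (ev2_counit_l h (lin_comp (lin_mulAr x) (lin_actl a))).
Qed.

Lemma morita_oneA (t : H) (b : A) :
  morita phi act mulA Sinv beta t oneA b = act t b.
Proof.
rewrite /morita -[in RHS](ma_act_one hMA b) -epsepsI_phi /epsepsI.
rewrite (lin_ev3_out _ _ (lin_actl b)); congr (act t _).
apply: eq_bigr => ix _; congr (_ *: _).
rewrite (ma_act_oneA hMA) (linZ (lin_mulAl _)) (ma_unit_l hMA).
rewrite !(linZ (lin_actl _)) scalerA.
by rewrite !(qh_eps_mul qh) epsSinv (qh_eps_mul qh) (qh_eps_beta qh) mulr1 mulrC.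
Qed.

Variable t : H.
Hypothesis t_integral : is_left_integral eps t.

Definition trace_integral (a : A) (f : dualH H) : A :=
  ev3 (integral_kernel t (fun p q => (f (Sinv p) : F) *: act q a)) phiinv.

Lemma trace_integral_linear a : linear (trace_integral a).
Proof.
rewrite /trace_integral.
apply: (@lin_ev3 _ _ (fun f : dualH H =>
          integral_kernel t (fun p q => (f (Sinv p) : F) *: act q a))) => u v w.
apply: (@lin_ev2 _ _ (fun (f : dualH H) p q =>
          (f (Sinv (S u * alpha * v * p)) : F) *: act (w * q) a)) => p q.
by move=> r f g; rewrite add_lfunE scale_lfunE scalerDl scalerA.
Qed.

Lemma trace_integral_hit a h f : trace_integral a (hit h f) = act h (trace_integral a f).
Proof.
pose G p q := (f (Sinv p) : F) *: act q a.
have bG : bilin G.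
  split=> [q|p].
  - exact: lin_scalel (lin_comp (linearP f) Sinv_lin).
  - exact: lin_scaler (lin_actl a).
transitivity (ev3 (integral_kernel t (fun p q => G (S h * p) q)) phiinv).
  apply: eq_ev3 => u v w; apply: eq_ev2 => p q.
  by rewrite /G comp_lfunE lfunE /= (SinvM (S h)) SK.
rewrite integral_transfer // /trace_integral (lin_ev3_out _ _ (lin_actr h)).
apply: eq_ev3 => u v w; rewrite (lin_ev2_out _ _ (lin_actr h)).
by apply: eq_ev2 => p q; rewrite /G (linZ (lin_actr h)) (ma_act_mul hMA).
Qed.

Lemma trace_integral_eps a : trace_integral a eps = act t a.
Proof.
rewrite -[t in RHS]mul1r -epsepsI_phiinv /epsepsI.
rewrite (lin_ev3_out _ _ (lin_comp (lin_actl a) (lin_mulr t))).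
apply: eq_ev3 => u v w.
rewrite -!scalerAl !(linZ (lin_actl a)).
rewrite -(ev2_counit_l t (lin_comp (lin_actl a) (lin_mull w))).
rewrite /integral_kernel /ev2 !scaler_sumr; apply: eq_bigr => iy _ /=.
rewrite epsSinv !(qh_eps_mul qh) epsS (qh_eps_alpha qh) mulr1 !scalerA; congr (_ *: _).
rewrite /GRing.scale /=; ring.
Qed.

Lemma trace_one_of_morita_onto :
  (forall x : A, Hinvariant eps act x ->
     exists s : seq (A * A), x = \sum_(p <- s) morita phi act mulA Sinv beta t p.1 p.2) ->
  exists a : A, act t a = oneA.
Proof.
move=> surj; have [s ->] := surj oneA (ma_act_oneA hMA).
by eexists; rewrite /morita -(lin_sum (lin_actr t)).
Qed.

Lemma trace_one_of_total_integral : t != 0 ->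
  (exists Phi : dualH H -> A, total_integral eps act oneA Phi) ->
  exists a : A, act t a = oneA.
Proof.
move=> tn0 [Phi [_ Phi_hit Phi_eps]]; have [f tf] := hit_integral_eps tn0 t_integral.
by exists (Phi f); rewrite -Phi_hit tf.
Qed.

Lemma morita_onto_of_trace_one :
  (exists a : A, act t a = oneA) ->
  forall x : A, Hinvariant eps act x ->
     exists s : seq (A * A), x = \sum_(p <- s) morita phi act mulA Sinv beta t p.1 p.2.
Proof.
move=> [a ta] x x_inv; exists [:: (oneA, mulA x a)].
rewrite big_cons big_nil addr0 /= morita_oneA.
by rewrite act_mul_invariant // ta (ma_unit_r hMA).
Qed.

Lemma total_integral_of_trace_one :
  (exists a : A, act t a = oneA) ->
  exists Phi : dualH H -> A, total_integral eps act oneA Phi.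
Proof.
move=> [a ta]; exists (trace_integral a); split.
- exact: trace_integral_linear.
- exact: trace_integral_hit.
- by rewrite trace_integral_eps.
Qed.

End ModuleAlgebra.
End QuasiHopf.
End Tensors.

Theorem mainTheorem6 (F : fieldType) (H : falgType F)
    (Delta : H -> tensor H 2) (eps : dualH H) (phi phiinv : tensor H 3)
    (S Sinv : H -> H) (alpha beta : H) :
  is_quasiHopf Delta eps phi phiinv S alpha beta ->
  cancel S Sinv -> cancel Sinv S ->
  forall t : H, t != 0 -> is_left_integral eps t ->
  forall (A : lmodType F) (act : H -> A -> A) (mulA : A -> A -> A) (oneA : A),
  is_module_algebra Delta eps phi act mulA oneA ->
  [<-> (* 1. the Morita map is surjective onto B = A^H *)
       (forall x : A, Hinvariant eps act x ->
          exists s : seq (A * A),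
            x = \sum_(p <- s) morita phi act mulA Sinv beta t p.1 p.2);
       (* 2. there is a total integral for A *)
       (exists Phi : dualH H -> A, total_integral eps act oneA Phi);
       (* 3. A has an element of trace one *)
       (exists a : A, act t a = oneA)].
Proof.
move=> qh SK SinvK t tn0 t_integral A act mulA oneA hMA; tfae.
- by move/(trace_one_of_morita_onto hMA)/(total_integral_of_trace_one qh SK SinvK hMA t_integral).
- exact: trace_one_of_total_integral t_integral tn0.
- by move=> ta x; apply: (morita_onto_of_trace_one qh SinvK hMA ta).
Qed.
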